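(* Let $T=(V,E)$ be a finite tree with $V=\{1,\dots,n\}$, rooted at a vertex $v_0$ and equipped with a fixed left-to-right ordering of children, and let $e_i=(p_i,q_i)$, $i=1,\dots,k$, be its edges, where $p_i$ is the parent of $q_i$, enumerated level by level starting from the root and proceeding from left to right at every depth (breadth-first order). Let $N$ be a symmetric positive definite $n\times n$ real matrix and $M=N_T$. For $j=2,\dots,k$ let $A_j=\bigcup_{i=1}^{j-1}\{p_i,q_i\}\setminus\{p_j\}$, $$\sigma_j=M_{p_j,p_j}-M_{p_j,A_j}M_{A_j,A_j}^{-1}M_{A_j,p_j},\qquad \eta_j=M_{p_j,p_j}-M_{p_j,q_j}^2M_{q_j,q_j}^{-1}.$$ Then $M$ is positive definite if and only if $\sigma_j+\eta_j-M_{p_j,p_j}>0$ for every $j=2,\dots,k$.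
   Context: For a symmetric $n\times n$ real matrix $N=(n_{ij})$, $N_T$ is defined by $(N_T)_{ij}=n_{ij}$ if $i=j$ or $(i,j)\in E$, and $0$ otherwise. For index sets $X,Y$, $M_{XY}$ denotes the submatrix of $M$ with rows in $X$ and columns in $Y$; for a single vertex $x$, $M_{x,Y}$ denotes the corresponding row vector and $M_{x,x}$ the diagonal entry. *)

From HB Require Import structures.
From mathcomp Require Import all_boot all_order all_algebra.
Set Implicit Arguments. Unset Strict Implicit. Unset Printing Implicit Defensive.
Import Order.TTheory GRing.Theory Num.Theory.

(* ---------- graphs on the vertex set 'I_n (= {1,...,n}, 0-indexed) ---------- *)

Definition simple_graph (n : nat) (E : rel 'I_n) : Prop :=
  symmetric E /\ irreflexive E.

Definition connected_graph (n : nat) (E : rel 'I_n) : Prop :=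
  forall u v, connect E u v.

Definition acyclic_graph (n : nat) (E : rel 'I_n) : Prop :=
  forall c : seq 'I_n, uniq c -> cycle E c -> (size c <= 2)%N.

Definition is_tree (n : nat) (E : rel 'I_n) : Prop :=
  [/\ simple_graph E, connected_graph E & acyclic_graph E].

Fixpoint walkn (n : nat) (E : rel 'I_n) (m : nat) (u v : 'I_n) : bool :=
  match m with
  | 0 => u == v
  | m'.+1 => [exists w, E u w && walkn E m' w v]
  end.

Definition gdist (n : nat) (E : rel 'I_n) (u v : 'I_n) : nat :=
  find (fun m => walkn E m u v) (iota 0 n).

Definition depth (n : nat) (E : rel 'I_n) (v0 v : 'I_n) : nat := gdist E v0 v.

(* the edge list es = [:: (p_1,q_1); ...; (p_k,q_k)] (0-indexed here) *)
Definition par (n : nat) (v0 : 'I_n) (es : seq ('I_n * 'I_n)) (i : nat) : 'I_n :=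
  (nth (v0, v0) es i).1.
Definition chl (n : nat) (v0 : 'I_n) (es : seq ('I_n * 'I_n)) (i : nat) : 'I_n :=
  (nth (v0, v0) es i).2.

Definition vpos (n : nat) (v0 : 'I_n) (es : seq ('I_n * 'I_n)) (v : 'I_n) : nat :=
  index v (v0 :: map snd es).

(* es is the list of the edges of the tree E rooted at v0, each oriented
   (parent, child), in breadth-first order: level by level, and at each level
   from left to right, the left-to-right order of a level being induced by the
   left-to-right order of the parents and a (fixed, arbitrary) order of the
   children of each vertex. *)
Definition bfs_edge_enum (n : nat) (E : rel 'I_n) (v0 : 'I_n)
    (es : seq ('I_n * 'I_n)) : Prop :=
  [/\ uniq es,
      (forall e, e \in es -> E e.1 e.2 && (depth E v0 e.1 < depth E v0 e.2)%N),
      (forall u v, E u v -> ((u, v) \in es) || ((v, u) \in es)),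
      (forall i j, (i < j < size es)%N ->
         (depth E v0 (chl v0 es i) <= depth E v0 (chl v0 es j))%N)
    & (forall i j, (i < j < size es)%N ->
         depth E v0 (chl v0 es i) = depth E v0 (chl v0 es j) ->
         (vpos v0 es (par v0 es i) <= vpos v0 es (par v0 es j))%N)].

Local Open Scope ring_scope.

Definition posdef (R : numDomainType) (n : nat) (A : 'M[R]_n) : Prop :=
  A^T = A /\ forall x : 'cV[R]_n, x != 0 -> 0 < (x^T *m A *m x) 0 0.

Definition tree_part (R : numDomainType) (n : nat) (E : rel 'I_n) (N : 'M[R]_n)
  : 'M[R]_n :=
  \matrix_(i, j) (if (i == j) || E i j then N i j else 0).

Definition subsq (R : numDomainType) (n : nat) (A : {set 'I_n}) (M : 'M[R]_n)
  : 'M[R]_#|A| :=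
  \matrix_(a, b) M (enum_val a) (enum_val b).
Definition subrow (R : numDomainType) (n : nat) (x : 'I_n) (A : {set 'I_n})
  (M : 'M[R]_n) : 'rV[R]_#|A| :=
  \row_b M x (enum_val b).

Definition Aset (n : nat) (v0 : 'I_n) (es : seq ('I_n * 'I_n)) (j : nat)
  : {set 'I_n} :=
  (\bigcup_(i < j) [set par v0 es i; chl v0 es i]) :\ par v0 es j.

Definition sigma_j (R : realFieldType) (n : nat) (v0 : 'I_n)
  (es : seq ('I_n * 'I_n)) (M : 'M[R]_n) (j : nat) : R :=
  let p := par v0 es j in
  let A := Aset v0 es j in
  M p p - (subrow p A M *m invmx (subsq A M) *m (subrow p A M)^T) 0 0.

Definition eta_j (R : realFieldType) (n : nat) (v0 : 'I_n)
  (es : seq ('I_n * 'I_n)) (M : 'M[R]_n) (j : nat) : R :=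
  let p := par v0 es j in
  let q := chl v0 es j in
  M p p - M p q ^+ 2 / M q q.

From HB Require Import structures.
From mathcomp Require Import all_boot all_order all_algebra.
From mathcomp Require Import zify ring lra.
Set Implicit Arguments. Unset Strict Implicit. Unset Printing Implicit Defensive.
Import Order.TTheory GRing.Theory Num.Theory.

(* Let D_j be the root together with the endpoints of the first j edges.  In
   breadth-first order the edge e_j hangs the fresh vertex q_j below p_j, which
   is already in D_j, and p_j is the only neighbour of q_j in D_j; moreover
   A_j = D_j minus p_j.  So on D_j + q_j the row of M at q_j vanishes on A_j,
   and by a Schur complement argument M is positive definite on D_j + q_j iff
   it is on D_j and M_pp - M_pA M_AA^-1 M_Ap - M_pq^2 / M_qq
   = sigma_j + eta_j - M_pp is positive.  The induction starts from D_1, an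
   edge of T, on which M coincides with the positive definite matrix N. *)

Section Walks.
Variables (n : nat) (E : rel 'I_n).

Lemma walkn_rcons m u w v : walkn E m u w -> E w v -> walkn E m.+1 u v.
Proof.
elim: m u => [|m IHm] u /=.
  by move=> /eqP-> Ewv; apply/existsP; exists v; rewrite Ewv eqxx.
case/existsP=> x /andP[Eux Hx] Ewv; apply/existsP; exists x.
by rewrite Eux; apply: IHm Hx Ewv.
Qed.

Lemma walkn_last m u v : walkn E m.+1 u v -> exists2 w, walkn E m u w & E w v.
Proof.
elim: m u => [|m IHm] u /=.
  by case/existsP=> x /andP[Eux /eqP<-]; exists u.
case/existsP=> x /andP[Eux Hx]; have [w Hw Ewv] := IHm _ Hx.
by exists w => //; apply/existsP; exists x; rewrite Eux.
Qed.

Lemma walkn_path x s : path E x s -> walkn E (size s) x (last x s).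
Proof.
elim: s x => [|y s IHs] x //= /andP[Exy Hs].
by apply/existsP; exists y; rewrite Exy IHs.
Qed.

End Walks.

Section Depth.
Variables (n : nat) (E : rel 'I_n) (v0 : 'I_n).
Hypothesis connE : connected_graph E.

Lemma depth_walkn v : walkn E (depth E v0 v) v0 v /\ (depth E v0 v < n)%N.
Proof.
have /connectP[s Es ->] := connE v0 v.
have [s' Es' Us' _] := shortenP Es.
have lt_s'n : (size s' < n)%N.
  move/card_uniqP: Us' => /= <-.
  by apply: leq_trans (max_card _) _; rewrite card_ord.
have Hfind : has (fun m => walkn E m v0 (last v0 s')) (iota 0 n).
  by apply/hasP; exists (size s'); rewrite ?mem_iota ?walkn_path.
have lt_depth : (depth E v0 (last v0 s') < n)%N.
  by rewrite -[X in (_ < X)%N](size_iota 0 n) -has_find.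
by split=> //; have := nth_find 0 Hfind; rewrite nth_iota.
Qed.

Lemma depth_leq_walkn v m : walkn E m v0 v -> (depth E v0 v <= m)%N.
Proof.
move=> Hw; have [_ lt_dn] := depth_walkn v.
case: (ltnP m n) => [lt_mn|]; last exact: leq_trans (ltnW lt_dn).
rewrite leqNgt; apply/negP => /(before_find 0).
by rewrite nth_iota // add0n Hw.
Qed.

Lemma depth_eq0 v : depth E v0 v = 0%N -> v = v0.
Proof. by move=> Hd; have [] := depth_walkn v; rewrite Hd => /eqP. Qed.

Lemma depth_root : depth E v0 v0 = 0%N.
Proof. by apply/eqP; rewrite -leqn0; apply: (@depth_leq_walkn v0 0) => /=. Qed.

Lemma depth_edge u v : E u v -> (depth E v0 v <= (depth E v0 u).+1)%N.
Proof.
by move=> Euv; apply/depth_leq_walkn/(walkn_rcons _ Euv); case: (depth_walkn u).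
Qed.

Lemma depth_parent v :
  (0 < depth E v0 v)%N -> exists2 u, E u v & (depth E v0 u).+1 = depth E v0 v.
Proof.
have [] := depth_walkn v; case Hd: (depth E v0 v) => [|d] // Hw _ _.
have [u Hu Euv] := walkn_last Hw; exists u => //.
have := depth_leq_walkn Hu; have := depth_edge Euv; rewrite Hd; lia.
Qed.

End Depth.

Section Tree.
Variables (n : nat) (E : rel 'I_n) (v0 : 'I_n).
Hypothesis treeE : is_tree E.

Let symE : symmetric E. Proof. by case: treeE => [[]]. Qed.
Let connE : connected_graph E. Proof. by case: treeE. Qed.

Lemma tree_level_path d a b :
  depth E v0 a = d -> depth E v0 b = d -> a != b ->
  exists s, [/\ path E a (rcons s b), uniq (a :: rcons s b)
              & all (fun x => depth E v0 x < d)%N s].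
Proof.
elim: d a b => [|d IHd] a b Ha Hb neq_ab.
  by rewrite (depth_eq0 connE Ha) (depth_eq0 connE Hb) eqxx in neq_ab.
have [|pa Epa] := @depth_parent _ _ v0 connE a; rewrite Ha // => -[Hpa].
have [|pb Epb] := @depth_parent _ _ v0 connE b; rewrite Hb // => -[Hpb].
have shallow_neq x y : (depth E v0 x <= d)%N -> depth E v0 y = d.+1 -> x != y.
  by move=> Hx Hy; apply: contraTneq Hx => ->; rewrite Hy ltnn.
have [eq_pab|neq_pab] := eqVneq pa pb.
  exists [:: pa]; split => /=; first by rewrite (symE a) Epa eq_pab Epb.
    by rewrite !inE negb_or neq_ab eq_sym !shallow_neq ?Hpa.
  by rewrite Hpa ltnSn.
have [s [Hs Us Ds]] := IHd pa pb Hpa Hpb neq_pab.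
have Ds' : all (fun x => depth E v0 x <= d)%N (pa :: rcons s pb).
  rewrite /= Hpa all_rcons Hpb leqnn /=.
  by apply/allP => x /(allP Ds) /ltnW.
exists (pa :: rcons s pb); split.
- by rewrite rcons_cons /= (symE a) Epa rcons_path Hs last_rcons.
- have deep_notin y : depth E v0 y = d.+1 -> y \notin pa :: rcons s pb.
    by move=> Hy; apply/negP => /(allP Ds') /=; rewrite Hy ltnn.
  rewrite cons_uniq rcons_uniq Us andbT mem_rcons inE negb_or.
  by rewrite neq_ab !deep_notin.
- rewrite /= Hpa ltnSn all_rcons Hpb ltnSn /=.
  by apply/allP => x /(allP Ds) /ltnW.
Qed.

Lemma tree_parent_unique u w v :
  E u v -> E w v -> (depth E v0 u).+1 = depth E v0 v ->
  (depth E v0 w).+1 = depth E v0 v -> u = w.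
Proof.
move=> Euv Ewv Hu Hw; apply/eqP/negPn/negP => neq_uw.
have Hwu : depth E v0 w = depth E v0 u by apply: succn_inj; rewrite Hw Hu.
have [s [Hs Us Ds]] := tree_level_path erefl Hwu neq_uw.
have v_notin : v \notin u :: rcons s w.
  rewrite inE mem_rcons inE; apply/or3P => -[/eqP Evu|/eqP Evw|/(allP Ds)/=].
  - by move: Hu; rewrite Evu => /esym/n_Sn.
  - by move: Hw; rewrite Evw => /esym/n_Sn.
  - by rewrite -Hu ltnNge leqW.
case: treeE => _ _ /(_ (v :: u :: rcons s w)).
rewrite cons_uniq v_notin Us /= (symE v) Euv rcons_path Hs last_rcons Ewv.
by rewrite size_rcons => /(_ isT isT).
Qed.

End Tree.

Section BfsEnumeration.
Variables (n : nat) (E : rel 'I_n) (v0 : 'I_n) (es : seq ('I_n * 'I_n)).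
Hypotheses (treeE : is_tree E) (bfs_es : bfs_edge_enum E v0 es).

Let connE : connected_graph E. Proof. by case: treeE. Qed.
Local Notation p_ i := (par v0 es i).
Local Notation q_ i := (chl v0 es i).
Local Notation dep := (depth E v0).

Lemma bfs_edge i : (i < size es)%N -> E (p_ i) (q_ i) /\ (dep (p_ i) < dep (q_ i))%N.
Proof. by case: bfs_es => _ Hes _ _ _ /(mem_nth (v0, v0))/Hes/andP. Qed.

Lemma bfs_depth_chl i : (i < size es)%N -> (dep (p_ i)).+1 = dep (q_ i).
Proof.
move=> lt_i; have [Ei lt_d] := bfs_edge lt_i.
by apply/eqP; rewrite eqn_leq lt_d depth_edge.
Qed.

Lemma bfs_depth_mono i j :
  (i <= j)%N -> (j < size es)%N -> (dep (q_ i) <= dep (q_ j))%N.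
Proof.
case: bfs_es => _ _ _ Hmono _; rewrite leq_eqVlt => /orP[/eqP->//|lt_ij] lt_j.
by apply: Hmono; rewrite lt_ij.
Qed.

Lemma bfs_index_lt i j : (i < size es)%N ->
  (dep (q_ i) < dep (q_ j))%N -> (i < j)%N.
Proof.
move=> lt_i lt_d; rewrite ltnNge; apply: contraTN lt_d => le_ji.
by rewrite -leqNgt bfs_depth_mono.
Qed.

Lemma bfs_edge_index u v : E u v -> (dep u < dep v)%N ->
  exists2 i, (i < size es)%N & p_ i = u /\ q_ i = v.
Proof.
case: bfs_es => _ Hes Hall _ _ Euv lt_uv.
have uv_es : (u, v) \in es.
  by case/orP: (Hall _ _ Euv) => // /Hes/andP[_]; rewrite ltnNge ltnW.
by exists (index (u, v) es); rewrite ?index_mem // /par /chl nth_index.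
Qed.

Lemma bfs_chl_exists v : v != v0 -> exists2 i, (i < size es)%N & q_ i = v.
Proof.
move=> neq_v; have [|u Euv Hu] := @depth_parent _ _ v0 connE v.
  by rewrite lt0n; apply: contra neq_v => /eqP/(depth_eq0 connE) ->.
by have [|i lt_i [_ <-]] := bfs_edge_index Euv; [rewrite -Hu | exists i].
Qed.

Lemma bfs_par0 : (0 < size es)%N -> p_ 0 = v0.
Proof.
move=> es_gt0; apply/eqP/negPn/negP => /bfs_chl_exists[i lt_i Hi].
have := bfs_depth_mono (leq0n i) lt_i; rewrite Hi -(bfs_depth_chl es_gt0).
by rewrite ltnn.
Qed.

Lemma bfs_edge0 : (0 < size es)%N -> E v0 (q_ 0).
Proof. by move=> es_gt0; rewrite -{1}(bfs_par0 es_gt0); case: (bfs_edge es_gt0). Qed.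

Definition visited j : {set 'I_n} :=
  v0 |: \bigcup_(i < j) [set p_ i; q_ i].

Lemma visited0 : visited 0 = [set v0].
Proof. by rewrite /visited big_ord0 setU0. Qed.

Lemma visitedP j x : reflect (x = v0 \/ exists2 i, (i < j)%N & x = p_ i \/ x = q_ i)
  (x \in visited j).
Proof.
apply: (iffP setU1P) => -[->|]; try by left.
  case/bigcupP=> i _; rewrite !inE => /orP[]/eqP->; right; exists i => //.
  - by left.
  - by right.
case=> i lt_ij Hx; right; apply/bigcupP; exists (Ordinal lt_ij) => //.
by rewrite !inE; case: Hx => ->; rewrite eqxx ?orbT.
Qed.

Lemma visited_all : visited (size es) = setT.
Proof.
apply/setP => x; rewrite in_setT; apply/visitedP.
have [->|/bfs_chl_exists[i lt_i <-]] := eqVneq x v0; first by left.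
by right; exists i => //; right.
Qed.

Lemma par_visited j : (j < size es)%N -> p_ j \in visited j.
Proof.
move=> lt_j; apply/visitedP.
have [->|/bfs_chl_exists[i lt_i Hi]] := eqVneq (p_ j) v0; first by left.
right; exists i; last by right.
by apply: (bfs_index_lt lt_i); rewrite Hi; case: (bfs_edge lt_j).
Qed.

Lemma visitedS j : (j < size es)%N -> visited j.+1 = q_ j |: visited j.
Proof.
move=> /par_visited; rewrite /visited => pj; apply/setP => x.
rewrite big_ord_recr /= !inE in pj *.
have [->|_] := eqVneq x (p_ j); first by rewrite pj !orbT.
by case: (x == v0); case: (x \in _); case: (x == q_ j).
Qed.

Lemma visited1 : (0 < size es)%N -> visited 1 = [set v0; q_ 0].
Proof. by move=> es_gt0; rewrite visitedS // visited0 setUC. Qed.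

Lemma chl_notin_visited j : (j < size es)%N -> q_ j \notin visited j.
Proof.
move=> lt_j; have [_ lt_dj] := bfs_edge lt_j.
apply/negP => /visitedP[Hq|[i lt_ij [Hp|Hq]]].
- by move: lt_dj; rewrite Hq depth_root.
- have lt_i := ltn_trans lt_ij lt_j; have [_ lt_di] := bfs_edge lt_i.
  have := bfs_depth_mono (ltnW lt_ij) lt_j.
  by rewrite Hp leqNgt lt_di.
- have lt_i := ltn_trans lt_ij lt_j; have [Ei _] := bfs_edge lt_i.
  have eq_p : p_ i = p_ j.
    apply: (tree_parent_unique (v0 := v0) treeE (v := q_ j)).
    - by rewrite Hq.
    - by case: (bfs_edge lt_j).
    - by rewrite Hq (bfs_depth_chl lt_i).
    - exact: bfs_depth_chl.
  have : nth (v0, v0) es i = nth (v0, v0) es j.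
    by move: eq_p Hq; rewrite /par /chl; do 2!case: nth => ? ? /=; move=> -> ->.
  case: bfs_es => uniq_es _ _ _ _.
  by move/eqP; rewrite nth_uniq // => /eqP eq_ij; rewrite eq_ij ltnn in lt_ij.
Qed.

Lemma depth_visited j x : (j < size es)%N -> x \in visited j -> (dep x <= dep (q_ j))%N.
Proof.
move=> lt_j /visitedP[->|[i lt_ij Hx]]; first by rewrite depth_root.
have le_dij := bfs_depth_mono (ltnW lt_ij) lt_j.
case: Hx => -> //; apply: leq_trans (ltnW _) le_dij.
by case: (bfs_edge (ltn_trans lt_ij lt_j)).
Qed.

Lemma chl_visited_nbr j x : (j < size es)%N ->
  x \in visited j -> x != p_ j -> ~~ E (q_ j) x.
Proof.
move=> lt_j Hx; apply: contra_neqN => Eqx.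
have [[symE _] _ _] := treeE; case: bfs_es => _ Hes Hall _ _.
have /orP[/Hes/andP[_ /= lt_dx]|/Hes/andP[Exq /= lt_dx]] := Hall _ _ Eqx.
  by move: (depth_visited lt_j Hx); rewrite leqNgt lt_dx.
apply: (tree_parent_unique (v0 := v0) treeE Exq); first by case: (bfs_edge lt_j).
  by apply/eqP; rewrite eqn_leq lt_dx depth_edge.
exact: bfs_depth_chl.
Qed.

Lemma Aset_visited j : (0 < j < size es)%N -> Aset v0 es j = visited j :\ p_ j.
Proof.
case/andP=> j_gt0 lt_j; rewrite /Aset /visited; congr (_ :\ _).
symmetry; apply/setUidPr; rewrite sub1set; apply/bigcupP; exists (Ordinal j_gt0) => //.
by rewrite !inE bfs_par0 ?eqxx // (leq_ltn_trans (leq0n _) lt_j).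
Qed.

End BfsEnumeration.

Local Open Scope ring_scope.

Section QuadraticForm.
Variables (R : realFieldType) (n : nat).
Implicit Types (M N : 'M[R]_n) (x : 'cV[R]_n) (A S T : {set 'I_n}).

Definition qform M x : R := (x^T *m M *m x) 0 0.

Definition supported_on S x := forall i, i \notin S -> x i 0 = 0.

(* Positive definiteness of the principal submatrix on S, phrased with vectors
   supported in S so that no reindexing is needed. *)
Definition posdef_on M S := forall x, supported_on S x -> x != 0 -> 0 < qform M x.

Lemma qform_supp M S x : supported_on S x ->
  qform M x = \sum_(i in S) \sum_(j in S) x i 0 * M i j * x j 0.
Proof.
move=> suppx; have qformE : qform M x = \sum_i \sum_j x i 0 * M i j * x j 0.
  rewrite /qform mxE exchange_big; apply: eq_bigr => j _; rewrite mxE mulr_suml.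
  by apply: eq_bigr => i _; rewrite mxE.
rewrite qformE (bigID [in S]) /= [X in _ + X]big1 ?addr0 => [|i /suppx->]; last first.
  by apply: big1 => j _; rewrite !mul0r.
apply: eq_bigr => i _; rewrite (bigID [in S]) /= [X in _ + X]big1 ?addr0 //.
by move=> j /suppx->; rewrite mulr0.
Qed.

Lemma posdef_onS M S T : S \subset T -> posdef_on M T -> posdef_on M S.
Proof.
by move=> subST posT x suppx; apply: posT => i /(contra (subsetP subST _)) /suppx.
Qed.

Lemma posdef_on_setT M : posdef M <-> M^T = M /\ posdef_on M setT.
Proof.
split=> -[symM posM]; split=> // x; last by apply: posM => i; rewrite in_setT.
by move=> _; apply: posM.
Qed.

Lemma posdef_on_eq M N S :
  posdef N -> {in S &, forall i j, M i j = N i j} -> posdef_on M S.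
Proof.
move=> [_ posN] eqMN x suppx x_neq0; have := posN x x_neq0.
rewrite -/(qform N x) !(qform_supp _ suppx).
by congr (_ < _); apply: eq_bigr => i Si; apply: eq_bigr => j Sj; rewrite eqMN.
Qed.

Lemma posdef_diag_gt0 N i : posdef N -> 0 < N i i.
Proof.
case=> _ posN; pose e : 'cV[R]_n := \col_j (j == i)%:R.
have e_neq0 : e != 0.
  by apply: contraTneq isT => /matrixP/(_ i 0); rewrite !mxE eqxx => /eqP; rewrite oner_eq0.
have suppe : supported_on [set i] e by move=> j; rewrite !inE mxE => /negbTE->.
have := posN e e_neq0; rewrite -/(qform N e) (qform_supp _ suppe).
by rewrite !big_set1 !mxE eqxx mul1r mulr1.
Qed.

Definition subvec A x : 'rV[R]_#|A| := \row_k x (enum_val k) 0.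

Definition extend A (y : 'rV[R]_#|A|) : 'cV[R]_n :=
  \col_i (if [pick k | enum_val k == i] is Some k then y 0 k else 0).

Lemma extend_out A (y : 'rV[R]_#|A|) i : i \notin A -> extend y i 0 = 0.
Proof. by rewrite mxE; case: pickP => [k /eqP<-|//]; rewrite enum_valP. Qed.

Lemma extend_val A (y : 'rV[R]_#|A|) k : extend y (enum_val k) 0 = y 0 k.
Proof.
rewrite mxE; case: pickP => [k' /eqP/enum_val_inj -> //|].
by move=> /(_ k); rewrite eqxx.
Qed.

Lemma subvec_extend A (y : 'rV[R]_#|A|) : subvec A (extend y) = y.
Proof. by apply/rowP => k; rewrite mxE extend_val. Qed.

Lemma qform_extend M A (y : 'rV[R]_#|A|) :
  M^T = M -> qform M (extend y) = (y *m subsq A M *m y^T) 0 0.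
Proof.
move=> symM; rewrite (qform_supp _ (@extend_out A y)) big_enum_val [RHS]mxE.
apply: eq_bigr => k _; rewrite big_enum_val [(y *m _) 0 k]mxE mulr_suml.
apply: eq_bigr => l _; rewrite !extend_val !mxE -[in RHS]symM mxE; ring.
Qed.

Lemma posdef_on_subsq M A (y : 'rV[R]_#|A|) :
  M^T = M -> posdef_on M A -> y != 0 -> 0 < (y *m subsq A M *m y^T) 0 0.
Proof.
move=> symM posA y_neq0; rewrite -qform_extend //; apply: posA; first exact: extend_out.
apply: contra_neq y_neq0 => ext0; rewrite -(subvec_extend y) ext0.
by apply/rowP => k; rewrite !mxE.
Qed.

End QuadraticForm.

Lemma mx_complete_square (R : comUnitRingType) m (S : 'M[R]_m) (r y : 'rV[R]_m)
    (b c : R) :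
  S^T = S -> S \in unitmx ->
  b ^+ 2 * c + 2 * b * (r *m y^T) 0 0 + (y *m S *m y^T) 0 0 =
  b ^+ 2 * (c - (r *m invmx S *m r^T) 0 0)
  + ((y + b *: (r *m invmx S)) *m S *m (y + b *: (r *m invmx S))^T) 0 0.
Proof.
move=> symS unitS; set w := r *m invmx S.
have wS : w *m S = r by rewrite mulmxKV.
have SwT : S *m w^T = r^T by rewrite trmx_mul trmx_inv symS mulmxA mulmxV ?mul1mx.
have scalar_tr (u v : 'rV[R]_m) : u *m v^T = v *m u^T.
  apply/matrixP => i j; rewrite (ord1 i) (ord1 j).
  by rewrite -[LHS](mxE _ _ 0 0 : (u *m v^T)^T 0 0 = _) trmx_mul trmxK.
rewrite linearD /= linearZ /= !mulmxDl !mulmxDr -!scalemxAl -!scalemxAr.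
rewrite wS -[y *m S *m w^T]mulmxA SwT (scalar_tr y r) (scalar_tr r w) !mxE; ring.
Qed.

Section PendantVertex.
Variables (R : realFieldType) (n : nat) (M : 'M[R]_n) (A : {set 'I_n}) (p q : 'I_n).
Hypotheses (symM : M^T = M) (pNA : p \notin A) (qNA : q \notin A) (neq_pq : p != q).
Hypotheses (Mq0 : {in A, forall i, M q i = 0}) (Mqq_gt0 : 0 < M q q).
Hypothesis posA : posdef_on M A.

Let S := subsq A M.
Let r := subrow p A M.
Let w := r *m invmx S.
(* The Schur complement of the block on [q |: A], which is block diagonal. *)
Let schur := M p p - (r *m invmx S *m r^T) 0 0 - M p q ^+ 2 / M q q.
Let B := q |: (p |: A).

Let Msym i j : M j i = M i j. Proof. by rewrite -[in LHS]symM mxE. Qed.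

Lemma qform_pendant_expand x : supported_on B x ->
  qform M x = x q 0 ^+ 2 * M q q + 2 * x q 0 * x p 0 * M p q + x p 0 ^+ 2 * M p p
    + 2 * x p 0 * (r *m (subvec A x)^T) 0 0
    + (subvec A x *m S *m (subvec A x)^T) 0 0.
Proof.
move=> suppx; pose f i j := x i 0 * M i j * x j 0.
have qNpA : q \notin p |: A by rewrite !inE negb_or eq_sym neq_pq.
have sumB (F : 'I_n -> R) : \sum_(i in B) F i = F q + (F p + \sum_(i in A) F i).
  by rewrite big_setU1 //= big_setU1.
rewrite (qform_supp _ suppx) -/f.
under eq_bigr => i _ do rewrite sumB.
rewrite sumB !big_split /=.
have fqA : \sum_(i in A) f q i = 0.
  by apply: big1 => i /Mq0; rewrite /f => ->; rewrite mulr0 mul0r.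
have fAq : \sum_(i in A) f i q = 0.
  by apply: big1 => i /Mq0; rewrite /f Msym => ->; rewrite mulr0 mul0r.
have fAp : \sum_(i in A) f i p = \sum_(i in A) f p i.
  by apply: eq_bigr => i _; rewrite /f Msym; ring.
have rxE : (r *m (subvec A x)^T) 0 0 = \sum_(i in A) M p i * x i 0.
  by rewrite big_enum_val mxE; apply: eq_bigr => k _; rewrite !mxE.
have SxE : (subvec A x *m S *m (subvec A x)^T) 0 0 = \sum_(i in A) \sum_(j in A) f i j.
  rewrite big_enum_val mxE; apply: eq_bigr => k _; rewrite big_enum_val mxE mulr_suml.
  by apply: eq_bigr => l _; rewrite !mxE /f Msym; ring.
have fpA : \sum_(i in A) f p i = x p 0 * \sum_(i in A) M p i * x i 0.
  by rewrite mulr_sumr; apply: eq_bigr => i _; rewrite /f mulrA.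
rewrite fqA fAq fAp rxE SxE fpA /f (Msym p q); ring.
Qed.

Let symS : S^T = S. Proof. by apply/matrixP => a b; rewrite !mxE Msym. Qed.

Let S_pos (y : 'rV[R]_#|A|) : y != 0 -> 0 < (y *m S *m y^T) 0 0.
Proof. exact: posdef_on_subsq. Qed.

Let S_ge0 (y : 'rV[R]_#|A|) : 0 <= (y *m S *m y^T) 0 0.
Proof. by have [->|/S_pos/ltW//] := eqVneq y 0; rewrite !mul0mx mxE. Qed.

Let unitS : S \in unitmx.
Proof.
rewrite unitmxE unitfE; apply/negP => /det0P[y y_neq0 yS0].
by have := S_pos y_neq0; rewrite yS0 mul0mx mxE ltxx.
Qed.

Lemma qform_pendant_square x : supported_on B x ->
  qform M x = M q q * (x q 0 + x p 0 * M p q / M q q) ^+ 2 + x p 0 ^+ 2 * schur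
    + ((subvec A x + x p 0 *: w) *m S *m (subvec A x + x p 0 *: w)^T) 0 0.
Proof.
move=> suppx; rewrite qform_pendant_expand // -!addrA.
rewrite [X in _ + (_ + X)]addrA [X in _ + (_ + X)]mx_complete_square //.
rewrite /schur -/w; field; exact: lt0r_neq0.
Qed.

Let supp_eq0 (x : 'cV[R]_n) : supported_on B x ->
  x q 0 = 0 -> x p 0 = 0 -> subvec A x = 0 -> x = 0.
Proof.
move=> suppx xq0 xp0 xA0; apply/matrixP => i j; rewrite (ord1 j) mxE.
have [|/suppx//] := boolP (i \in B).
rewrite !inE => /or3P[/eqP->//|/eqP->//|Ai].
have := congr1 (fun v : 'rV_#|A| => v 0 (enum_rank_in Ai i)) xA0.
by rewrite !mxE enum_rankK_in.
Qed.

Lemma posdef_on_pendant : posdef_on M B <-> 0 < schur.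
Proof.
have Mqq_neq0 := lt0r_neq0 Mqq_gt0.
split=> [posB | schur_gt0 x suppx x_neq0].
  pose x : 'cV[R]_n := \col_i
    (if i == q then - (M p q / M q q) else if i == p then 1 else extend (- w) i 0).
  have suppx : supported_on B x.
    by move=> i; rewrite !inE !negb_or mxE => /and3P[/negbTE-> /negbTE-> /extend_out].
  have xq : x q 0 = - (M p q / M q q) by rewrite mxE eqxx.
  have xp : x p 0 = 1 by rewrite mxE (negbTE neq_pq) eqxx.
  have xA : subvec A x = - w.
    apply/rowP => k; have Ak : enum_val k \in A := enum_valP k.
    have [kq kp] : enum_val k != q /\ enum_val k != p.
      by split; apply: contraTneq Ak => ->.
    by rewrite [LHS]mxE /x mxE (negbTE kq) (negbTE kp) extend_val.
  have x_neq0 : x != 0 by apply: contra_eq_neq xp => ->; rewrite mxE eq_sym oner_neq0.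
  have := posB x suppx x_neq0; rewrite qform_pendant_square // xq xp xA.
  rewrite mul1r addNr scale1r addNr expr0n expr1n !mul0mx mxE mulr0 mul1r.
  by rewrite add0r addr0.
rewrite qform_pendant_square //.
have Mqq_sq_ge0 c : 0 <= M q q * c ^+ 2 by rewrite mulr_ge0 ?sqr_ge0 ?ltW.
have [xp0|xp_neq0] := eqVneq (x p 0) 0; last first.
  have : 0 < x p 0 ^+ 2 * schur by rewrite mulr_gt0 // exprn_even_gt0.
  by move: (Mqq_sq_ge0 (x q 0 + x p 0 * M p q / M q q)) (S_ge0 (subvec A x + x p 0 *: w)); lra.
rewrite xp0 !mul0r addr0 expr0n mul0r addr0 scale0r addr0.
have [xq0|xq_neq0] := eqVneq (x q 0) 0.
  rewrite xq0 expr0n mulr0 add0r; apply: S_pos.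
  by apply: contra_neq x_neq0; apply: supp_eq0.
have : 0 < M q q * x q 0 ^+ 2 by rewrite mulr_gt0 // exprn_even_gt0.
by move: (S_ge0 (subvec A x)); lra.
Qed.

End PendantVertex.

Section TreePart.
Variables (R : realFieldType) (n : nat) (E : rel 'I_n) (v0 : 'I_n).
Variables (es : seq ('I_n * 'I_n)) (N : 'M[R]_n).
Hypotheses (treeE : is_tree E) (bfs_es : bfs_edge_enum E v0 es) (posN : posdef N).

Local Notation M := (tree_part E N).
Local Notation p_ j := (par v0 es j).
Local Notation q_ j := (chl v0 es j).

Lemma tree_partE i j : M i j = if (i == j) || E i j then N i j else 0.
Proof. by rewrite mxE. Qed.

Lemma tree_part_sym : M^T = M.
Proof.
have [[symE _] _ _] := treeE; have [symN _] := posN.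
apply/matrixP => i j; rewrite mxE !tree_partE eq_sym symE.
by case: ifP => // _; rewrite -[in RHS]symN mxE.
Qed.

Lemma posdef_on_tree_part (S : {set 'I_n}) :
  {in S &, forall i j, (i == j) || E i j} -> posdef_on M S.
Proof.
by move=> cliqueS; apply: (posdef_on_eq posN) => i j Si Sj; rewrite tree_partE cliqueS.
Qed.

Lemma posdef_on_visitedS j : (0 < j < size es)%N -> posdef_on M (visited v0 es j) ->
  (posdef_on M (visited v0 es j.+1) <->
   0 < sigma_j v0 es M j + eta_j v0 es M j - M (p_ j) (p_ j)).
Proof.
move=> Hj posj; have /andP[_ lt_j] := Hj.
have Aj := Aset_visited treeE bfs_es Hj.
have pj := par_visited treeE bfs_es lt_j.
have pAj : p_ j |: Aset v0 es j = visited v0 es j by rewrite Aj setD1K.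
have qNj := chl_notin_visited treeE bfs_es lt_j.
have Mq0 : {in Aset v0 es j, forall i, M (q_ j) i = 0}.
  move=> i; rewrite Aj in_setD1 => /andP[neq_ip ij].
  have neq_qi : q_ j != i by apply: contraNneq qNj => ->.
  have nEqi := chl_visited_nbr treeE bfs_es lt_j ij neq_ip.
  by rewrite tree_partE (negbTE neq_qi) (negbTE nEqi).
have pNA : p_ j \notin Aset v0 es j by rewrite Aj setD11.
have qNA : q_ j \notin Aset v0 es j by apply: contra qNj; rewrite Aj => /setD1P[].
have neq_pq : p_ j != q_ j by apply: contraNneq qNj => <-.
have Mqq_gt0 : 0 < M (q_ j) (q_ j) by rewrite tree_partE eqxx posdef_diag_gt0.
have posA : posdef_on M (Aset v0 es j) by apply: posdef_onS posj; rewrite -pAj subsetUr.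
rewrite (visitedS treeE bfs_es lt_j) -pAj.
rewrite (posdef_on_pendant tree_part_sym pNA qNA neq_pq Mq0 Mqq_gt0 posA).
by rewrite /sigma_j /eta_j; split; lra.
Qed.

Lemma posdef_on_visited :
  (forall j, (1 <= j < size es)%N ->
     0 < sigma_j v0 es M j + eta_j v0 es M j - M (p_ j) (p_ j)) ->
  forall j, (j <= size es)%N -> posdef_on M (visited v0 es j).
Proof.
have [[symE _] _ _] := treeE.
move=> cond; elim=> [|j IHj] le_j.
  by rewrite visited0; apply: posdef_on_tree_part => x y /set1P-> /set1P->; rewrite eqxx.
have [j0|j_gt0] := posnP j.
  rewrite j0 in le_j *; rewrite (visited1 treeE bfs_es le_j).
  have E0 := bfs_edge0 treeE bfs_es le_j.
  apply: posdef_on_tree_part => x y.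
  by rewrite !inE => /orP[]/eqP-> /orP[]/eqP->; rewrite ?eqxx // ?(symE (q_ 0)) E0 orbT.
have Hj : (0 < j < size es)%N by rewrite j_gt0.
by apply/(posdef_on_visitedS Hj (IHj (ltnW le_j))); apply: cond.
Qed.

End TreePart.

Unset Implicit Arguments.

Theorem corollary6 (R : realFieldType) (n : nat) (E : rel 'I_n) (v0 : 'I_n)
    (es : seq ('I_n * 'I_n)) (N : 'M[R]_n) :
  is_tree E -> bfs_edge_enum E v0 es -> posdef N ->
  let M := tree_part E N in
  posdef M <->
  (forall j : nat, (1 <= j < size es)%N ->
     0 < sigma_j v0 es M j + eta_j v0 es M j - M (par v0 es j) (par v0 es j)).
Proof.
move=> treeE bfs_es posN M; rewrite posdef_on_setT.
split=> [[_ posM] j Hj | cond].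
  have posj := posdef_onS (subsetT (visited v0 es j)) posM.
  by apply/(posdef_on_visitedS treeE bfs_es posN Hj posj)/(posdef_onS (subsetT _) posM).
split; first exact: tree_part_sym.
by rewrite -(visited_all treeE bfs_es); apply: posdef_on_visited.
Qed.
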